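(* Let $g(u;a)=u(1-u)(u-a)$, $k>0$ and $a\in(0,1)$. Then: (i) If $d>0$ satisfies $d<\min\{\frac{a^2}{4k},\frac{(1-a)^2}{4}\}$ (which equals $\frac{a^2}{4k}$ if $a\le\frac{1}{1/\sqrt k+1}$ and $\frac{(1-a)^2}{4}$ if $a\ge\frac{1}{1/\sqrt k+1}$), then $c(a,d,k)=0$. (ii) Let $d_0(a,k):=\frac{1}{k+1}\min\{k\,d^+(a,k),\,d^-(a)\}$, where $d^-(a)=\max_{y\in(a,1)}\frac{g(y;a)}{y}$ and $d^+(a,k)=\max_{y\in(1-a,1)}\frac{-g(1-y;a)}{ky}$. Then for every $0<d<d_0(a,k)$ and every sequence $(s_i)_{i\in\mathbb Z}\subset\{0,1\}$ there is a function $\Phi:\mathbb R\to\mathbb R$ with $0=d(k\Phi(\xi+1)-(k+1)\Phi(\xi)+\Phi(\xi-1))+g(\Phi(\xi);a)$ for all $\xi\in\mathbb R$ and with $\Phi(i)\in[0,a)$ if $s_i=0$, $\Phi(i)\in(a,1]$ if $s_i=1$. In particular, for $0<d<d_0(a,k)$ there exist infinitely many bounded such solutions (solutions of the traveling wave equation with $c=0$). (iii) If $k>1$ and $d>\frac{a^2}{4(\sqrt k-1)^2}$, then $c(a,d,k)<0$.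
   Context: For $k>0$, $a\in(0,1)$, $d>0$ consider the traveling wave problem: find $c\in\mathbb R$ and $\Phi:\mathbb R\to\mathbb R$ with $$-c\Phi'(\xi)=d\big(k\Phi(\xi+1)-(k+1)\Phi(\xi)+\Phi(\xi-1)\big)+g(\Phi(\xi);a)\quad(\xi\in\mathbb R),\qquad \lim_{\xi\to-\infty}\Phi(\xi)=0,\ \lim_{\xi\to+\infty}\Phi(\xi)=1.$$ It is known (Mallet-Paret) that for bistable $g$ such as the cubic this problem has a solution with $\Phi$ non-decreasing and that $c$ is uniquely determined; it is denoted $c(a,d,k)$. *)

From Stdlib Require Import Reals Lra ZArith.
From Coquelicot Require Import Coquelicot.
Open Scope R_scope.

Definition g (u a : R) : R := u * (1 - u) * (u - a).

Definition lattice_rhs (a d k : R) (Phi : R -> R) (xi : R) : R :=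
  d * (k * Phi (xi + 1) - (k + 1) * Phi xi + Phi (xi - 1)) + g (Phi xi) a.

(* When c = 0 the derivative term vanishes
   and no regularity is required (pinned waves may be discontinuous). *)
Definition tw_solution (a d k c : R) (Phi : R -> R) : Prop :=
  (c <> 0 -> forall xi, ex_derive Phi xi) /\
  (forall xi, - c * Derive Phi xi = lattice_rhs a d k Phi xi) /\
  is_lim Phi m_infty 0 /\ is_lim Phi p_infty 1.

(* Solution with non-decreasing profile (the objects defining c(a,d,k)). *)
Definition monotone_tw_solution (a d k c : R) (Phi : R -> R) : Prop :=
  tw_solution a d k c Phi /\ (forall x y, x <= y -> Phi x <= Phi y).

Definition d_minus (a : R) : R :=
  real (Lub_Rbar (fun z => exists y, a < y < 1 /\ z = g y a / y)).

Definition d_plus (a k : R) : R :=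
  real (Lub_Rbar (fun z => exists y, 1 - a < y < 1 /\ z = - g (1 - y) a / (k * y))).

Definition d_zero (a k : R) : R := Rmin (k * d_plus a k) (d_minus a) / (k + 1).

Definition stationary_solution (a d k : R) (Phi : R -> R) : Prop :=
  forall xi, 0 = lattice_rhs a d k Phi xi.

(* A monotone front satisfies [-c Phi' = rhs] with [Phi' >= 0], so the sign of any single
   value of the right-hand side forces the sign of [c].  For small [d] the cubic dominates
   the coupling: the right-hand side is negative where [Phi = a/2] and positive where
   [Phi = (1+a)/2], so [c] is both [>= 0] and [<= 0].  For large [d] and [c >= 0] it is
   nonpositive everywhere; writing [k = (1 + sigma)^2], the increments of [Phi] along a
   unit lattice then stay below [sigma (b - Phi)] for some [b < 1], so [Phi] never
   reaches [1].
   For (ii), any pattern [s] gives ordered constant sub- and super-solutions of the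
   discrete equation ([0] or [(1+a)/2] below, [a/2] or [1] above); a damped step
   [u + rhs(u) / L] is monotone between them, so its iterates increase to an
   equilibrium, which extended to be constant on the cells [[i, i+1)] is stationary. *)

From Stdlib Require Import Reals Lra ZArith Lia ClassicalChoice.
From Coquelicot Require Import Coquelicot.
Open Scope R_scope.

Lemma is_lim_m_infty_ball (f : R -> R) (l eps : R) :
  is_lim f m_infty l -> 0 < eps -> exists M, forall x, x < M -> Rabs (f x - l) < eps.
Proof.
intros Hf Heps.
exact (proj2 (is_lim_spec f m_infty l) Hf (mkposreal eps Heps)).
Qed.

Lemma is_lim_p_infty_ball (f : R -> R) (l eps : R) :
  is_lim f p_infty l -> 0 < eps -> exists M, forall x, M < x -> Rabs (f x - l) < eps.
Proof.
intros Hf Heps.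
exact (proj2 (is_lim_spec f p_infty l) Hf (mkposreal eps Heps)).
Qed.

Lemma increasing_limits_bounds (Phi : R -> R) :
  increasing Phi -> is_lim Phi m_infty 0 -> is_lim Phi p_infty 1 ->
  forall x, 0 <= Phi x <= 1.
Proof.
intros Hmono H0 H1 x; split.
- change (Rbar_le 0 (Phi x)).
  apply (is_lim_le_loc Phi (fun _ => Phi x) m_infty); [|exact H0|apply is_lim_const].
  exists x; intros y Hy; apply Hmono; lra.
- change (Rbar_le (Phi x) 1).
  apply (is_lim_le_loc (fun _ => Phi x) Phi p_infty); [|apply is_lim_const|exact H1].
  exists x; intros y Hy; apply Hmono; lra.
Qed.

Lemma continuous_limits_attain (Phi : R -> R) (v : R) :
  continuity Phi -> is_lim Phi m_infty 0 -> is_lim Phi p_infty 1 -> 0 < v < 1 ->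
  exists z, Phi z = v.
Proof.
intros Hc H0 H1 Hv.
destruct (is_lim_m_infty_ball Phi 0 v H0 ltac:(lra)) as [M HM].
destruct (is_lim_p_infty_ball Phi 1 (1 - v) H1 ltac:(lra)) as [N HN].
pose proof (Rabs_def2 _ _ (HM (M - 1) ltac:(lra))) as Hlow.
pose proof (Rabs_def2 _ _ (HN (N + 1) ltac:(lra))) as Hhigh.
destruct (IVT_gen Phi (M - 1) (N + 1) v Hc) as [z [_ Hz]]; [|now exists z].
split; [apply Rle_trans with (Phi (M - 1)); [apply Rmin_l|lra]
       |apply Rle_trans with (Phi (N + 1)); [lra|apply Rmax_r]].
Qed.

Lemma tw_solution_continuous a d k c Phi :
  tw_solution a d k c Phi -> c <> 0 -> continuity Phi.
Proof.
intros [Hder _] Hc.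
apply derivable_continuous; intro x; apply ex_derive_Reals_0, Hder, Hc.
Qed.

(* [c * rhs = - c^2 Phi'] and [Phi' >= 0]. *)
Lemma monotone_tw_speed_mul_rhs_nonpos a d k c Phi :
  monotone_tw_solution a d k c Phi -> forall xi, c * lattice_rhs a d k Phi xi <= 0.
Proof.
intros [[Hder [Heq _]] Hmono] xi.
destruct (Req_dec c 0) as [->|Hc]; [lra|].
pose (pr := fun x => ex_derive_Reals_0 Phi x (Hder Hc x)).
pose proof (nonneg_derivative_0 Phi pr Hmono xi) as Hpos.
rewrite Derive_Reals in Hpos.
rewrite <- Heq; nra.
Qed.

Lemma monotone_tw_rhs_nonpos a d k c Phi :
  monotone_tw_solution a d k c Phi -> 0 <= c -> forall xi, lattice_rhs a d k Phi xi <= 0.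
Proof.
intros Hsol Hc xi.
destruct (Req_dec c 0) as [->|Hc0].
- destruct Hsol as [[_ [Heq _]] _]; rewrite <- Heq; lra.
- pose proof (monotone_tw_speed_mul_rhs_nonpos a d k c Phi Hsol xi); nra.
Qed.

Lemma lattice_rhs_neg_at_low_level a d k Phi z :
  0 < k -> 0 < a < 1 -> 0 < d -> 4 * d * k < a ^ 2 ->
  Phi z = a / 2 -> Phi (z - 1) <= a / 2 -> Phi (z + 1) <= 1 ->
  lattice_rhs a d k Phi z < 0.
Proof.
intros hk ha hd hsmall Hz Hl Hr.
unfold lattice_rhs, g; rewrite Hz.
assert (d * k * Phi (z + 1) <= d * k)
  by (rewrite <- (Rmult_1_r (d * k)) at 2; apply Rmult_le_compat_l; nra).
assert (d * Phi (z - 1) <= d * (a / 2)) by (apply Rmult_le_compat_l; lra).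
nra.
Qed.

Lemma lattice_rhs_pos_at_high_level a d k Phi z :
  0 < k -> 0 < a < 1 -> 0 < d -> 4 * d < (1 - a) ^ 2 ->
  Phi z = (1 + a) / 2 -> 0 <= Phi (z - 1) -> (1 + a) / 2 <= Phi (z + 1) ->
  0 < lattice_rhs a d k Phi z.
Proof.
intros hk ha hd hsmall Hz Hl Hr.
unfold lattice_rhs, g; rewrite Hz.
assert (d * k * ((1 + a) / 2) <= d * k * Phi (z + 1)) by (apply Rmult_le_compat_l; nra).
assert (0 <= d * Phi (z - 1)) by (apply Rmult_le_pos; lra).
nra.
Qed.

Lemma monotone_tw_pinned a d k c Phi :
  0 < k -> 0 < a < 1 -> 0 < d -> 4 * d * k < a ^ 2 -> 4 * d < (1 - a) ^ 2 ->
  monotone_tw_solution a d k c Phi -> c = 0.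
Proof.
intros hk ha hd hsmall1 hsmall2 Hsol.
destruct (Req_dec c 0) as [|Hc]; [assumption|].
pose proof Hsol as [Htw Hmono]; pose proof Htw as [_ [_ [H0 H1]]].
pose proof (increasing_limits_bounds Phi Hmono H0 H1) as Hb.
pose proof (tw_solution_continuous a d k c Phi Htw Hc) as Hcont.
destruct (continuous_limits_attain Phi (a / 2) Hcont H0 H1 ltac:(lra)) as [z1 Hz1].
destruct (continuous_limits_attain Phi ((1 + a) / 2) Hcont H0 H1 ltac:(lra)) as [z2 Hz2].
assert (Hneg : lattice_rhs a d k Phi z1 < 0).
{ apply lattice_rhs_neg_at_low_level; try lra; [|apply Hb].
  rewrite <- Hz1; apply Hmono; lra. }
assert (Hpos : 0 < lattice_rhs a d k Phi z2).
{ apply lattice_rhs_pos_at_high_level; try lra; [apply Hb|].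
  rewrite <- Hz2; apply Hmono; lra. }
pose proof (monotone_tw_speed_mul_rhs_nonpos a d k c Phi Hsol z1).
pose proof (monotone_tw_speed_mul_rhs_nonpos a d k c Phi Hsol z2).
nra.
Qed.

Lemma g_ge_line a D : 0 < a < 1 -> a ^ 2 / 4 < D ->
  exists b, a < b < 1 /\ forall u, 0 <= u <= b -> D * (u - b) <= g u a.
Proof.
intros ha hD.
assert (hD0 : 0 < D) by nra.
set (b := a + a ^ 2 * (1 - a) / (4 * D)).
assert (hb : a < b < 1).
{ assert (0 < a ^ 2 * (1 - a)) by (apply Rmult_lt_0_compat; [apply pow_lt|]; lra).
  assert (a ^ 2 * (1 - a) < 4 * D * (1 - a)) by (apply Rmult_lt_compat_r; lra).
  split; apply (Rmult_lt_reg_r (4 * D)); try lra;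
    unfold b; field_simplify; lra. }
exists b; split; [exact hb|].
intros u [hu0 hub]; unfold g.
destruct (Rle_or_lt u a) as [hua|hua].
- replace (D * (u - b)) with (D * (u - a) - a ^ 2 * (1 - a) / 4) by (unfold b; field; lra).
  assert (u * (a - u) <= a ^ 2 / 4) by (pose proof (pow2_ge_0 (u - a / 2)); nra).
  assert (u * (a - u) * (1 - u) <= a ^ 2 / 4 * (1 - u)) by (apply Rmult_le_compat_r; lra).
  assert (D * (u - a) <= a ^ 2 / 4 * (u - a))
    by (rewrite (Rmult_comm D), (Rmult_comm (a ^ 2 / 4)); apply Rmult_le_compat_neg_l; lra).
  lra.
- assert (0 <= u * (1 - u) * (u - a)) by (apply Rmult_le_pos; nra).
  assert (D * (u - b) <= 0) by (apply Rmult_le_0_l; lra).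
  lra.
Qed.

(* With [x = v (n+1)], [Y = x - v n] and [Y'] the next increment: if [Y <= sigma (b - x)]
   then [(1 + sigma)^2 Y' <= Y + sigma^2 (b - x) <= sigma (1 + sigma) (b - x)], which is
   the same bound one step later. *)
Lemma increment_barrier (f : R -> R) (v : nat -> R) (d sigma b : R) :
  0 < d -> 0 < sigma ->
  (forall u, 0 <= u <= b -> d * sigma ^ 2 * (u - b) <= f u) ->
  (forall n, 0 <= v n) -> (forall n, v n <= v (S n)) ->
  (forall n, d * ((1 + sigma) ^ 2 * (v (S (S n)) - v (S n)) - (v (S n) - v n))
             + f (v (S n)) <= 0) ->
  v 1%nat - v 0%nat <= sigma * (b - v 1%nat) ->
  forall n, v (S n) - v n <= sigma * (b - v (S n)).
Proof.
intros hd hsigma Hf Hpos Hmono Hrec Hbase.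
induction n as [|n IH]; [exact Hbase|].
pose proof (Hmono n) as Hstep; pose proof (Hrec n) as Hn.
set (x := v (S n)) in *; set (Y := v (S (S n)) - x) in *.
assert (Hxb : x <= b).
{ assert (0 <= b - x) by (apply (Rmult_le_reg_l sigma); lra).
  lra. }
pose proof (Hf x (conj (Hpos (S n)) Hxb)) as Hfx.
assert (d * (x - v n) <= d * (sigma * (b - x))) by (apply Rmult_le_compat_l; lra).
assert (Hd : d * ((1 + sigma) * ((1 + sigma) * Y)) <= d * ((1 + sigma) * (sigma * (b - x))))
  by lra.
apply Rmult_le_reg_l in Hd; [|lra].
apply Rmult_le_reg_l in Hd; [|lra].
unfold Y in *; lra.
Qed.

Lemma one_lt_sqrt k : 1 < k -> 1 < sqrt k.
Proof. intro hk; rewrite <- sqrt_1; apply sqrt_lt_1_alt; lra. Qed.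

Lemma increasing_front_rhs_nonpos_absurd a d k Phi :
  1 < k -> 0 < a < 1 -> 0 < d -> a ^ 2 < 4 * d * (sqrt k - 1) ^ 2 ->
  increasing Phi -> is_lim Phi m_infty 0 -> is_lim Phi p_infty 1 ->
  (forall xi, lattice_rhs a d k Phi xi <= 0) -> False.
Proof.
intros hk ha hd hlarge Hmono H0 H1 Hrhs.
pose proof (increasing_limits_bounds Phi Hmono H0 H1) as Hb.
set (sigma := sqrt k - 1) in hlarge.
assert (Hk : k = (1 + sigma) ^ 2)
  by (unfold sigma; rewrite <- (sqrt_sqrt k) at 1 by lra; ring).
assert (Hsigma : 0 < sigma) by (unfold sigma; pose proof (one_lt_sqrt k hk); lra).
destruct (g_ge_line a (d * sigma ^ 2) ha ltac:(lra)) as [b [hb Hline]].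
assert (Heps : 0 < sigma * b / (1 + sigma)) by (apply Rdiv_lt_0_compat; nra).
destruct (is_lim_m_infty_ball Phi 0 _ H0 Heps) as [M HM].
set (v := fun n => Phi (M - 2 + INR n)).
assert (Hinc : forall n, v (S n) - v n <= sigma * (b - v (S n))).
{ apply (increment_barrier (fun u => g u a) v d sigma b); auto.
  - intro n; apply Hb.
  - intro n; apply Hmono; rewrite S_INR; lra.
  - intro n; pose proof (Hrhs (M - 2 + INR (S n))) as Hn.
    unfold lattice_rhs in Hn; unfold v; rewrite !S_INR in *.
    replace (M - 2 + (INR n + 1) + 1) with (M - 2 + (INR n + 1 + 1)) in Hn by ring.
    replace (M - 2 + (INR n + 1) - 1) with (M - 2 + INR n) in Hn by ring.
    rewrite Hk in Hn; lra.
  - pose proof (Rabs_def2 _ _ (HM (M - 2 + INR 1) ltac:(simpl; lra))) as [Hv1 _].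
    assert (v 1%nat * (1 + sigma) < sigma * b).
    { apply (Rmult_lt_compat_r (1 + sigma)) in Hv1; [|lra].
      unfold v; field_simplify in Hv1; lra. }
    pose proof (Hb (M - 2 + INR 0)); unfold v in *; nra. }
destruct (is_lim_p_infty_ball Phi 1 (1 - b) H1 ltac:(lra)) as [N HN].
destruct (INR_unbounded (N - M + 2)) as [n Hn].
pose proof (Rabs_def2 _ _ (HN (M - 2 + INR (S n)) ltac:(rewrite S_INR; lra))).
pose proof (Hinc n) as Hn'.
assert (v n <= v (S n)) by (apply Hmono; rewrite S_INR; lra).
unfold v in *; nra.
Qed.

Lemma monotone_tw_speed_neg a d k c Phi :
  1 < k -> 0 < a < 1 -> 0 < d -> a ^ 2 < 4 * d * (sqrt k - 1) ^ 2 ->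
  monotone_tw_solution a d k c Phi -> c < 0.
Proof.
intros hk ha hd hlarge Hsol.
destruct (Rlt_or_le c 0) as [|Hc]; [assumption|exfalso].
pose proof Hsol as [[_ [_ [H0 H1]]] Hmono].
exact (increasing_front_rhs_nonpos_absurd a d k Phi hk ha hd hlarge Hmono H0 H1
         (monotone_tw_rhs_nonpos a d k c Phi Hsol Hc)).
Qed.

Section MonotoneIteration.

Variables (I : Type) (T : (I -> R) -> I -> R) (lo hi : I -> R).

Hypothesis lo_le_hi : forall i, lo i <= hi i.
Hypothesis T_monotone : forall u w,
  (forall j, lo j <= u j) -> (forall j, u j <= w j) -> (forall j, w j <= hi j) ->
  forall i, T u i <= T w i.
Hypothesis lo_le_T : forall i, lo i <= T lo i.
Hypothesis T_le_hi : forall i, T hi i <= hi i.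
Hypothesis T_continuous : forall (un : nat -> I -> R) (u : I -> R),
  (forall j, is_lim_seq (fun n => un n j) (u j)) ->
  forall i, is_lim_seq (fun n => T (un n) i) (T u i).

Lemma T_le_hi_of_le_hi u :
  (forall j, lo j <= u j) -> (forall j, u j <= hi j) -> forall i, T u i <= hi i.
Proof.
intros Hlo Hhi i; apply Rle_trans with (T hi i); [|apply T_le_hi].
apply T_monotone; auto using Rle_refl.
Qed.

Lemma iterates_increasing_bounded n :
  (forall i, lo i <= Nat.iter n T lo i) /\
  (forall i, Nat.iter n T lo i <= Nat.iter (S n) T lo i) /\
  (forall i, Nat.iter (S n) T lo i <= hi i).
Proof.
induction n as [|n [Hlo [Hinc Hhi]]]; simpl.
- split; [intro i; apply Rle_refl|split; [exact lo_le_T|]].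
  apply T_le_hi_of_le_hi; [intro i; apply Rle_refl|exact lo_le_hi].
- assert (Hlo' : forall i, lo i <= T (Nat.iter n T lo) i)
    by (intro i; apply Rle_trans with (Nat.iter n T lo i); auto).
  split; [exact Hlo'|split].
  + apply T_monotone; assumption.
  + apply T_le_hi_of_le_hi; assumption.
Qed.

Lemma monotone_iteration_fixed_point :
  exists u, (forall i, lo i <= u i <= hi i) /\ (forall i, T u i = u i).
Proof.
set (x n := Nat.iter n T lo).
assert (Hlim : forall i, is_lim_seq (fun n => x n i) (real (Lim_seq (fun n => x n i)))).
{ intro i; apply Lim_seq_correct', ex_finite_lim_seq_incr with (hi i); intro n;
    destruct (iterates_increasing_bounded n) as [_ [Hinc Hhi]].
  - apply Hinc.
  - apply Rle_trans with (x (S n) i); [apply Hinc|apply Hhi]. }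
exists (fun i => real (Lim_seq (fun n => x n i))); split.
- intro i; split.
  + change (Rbar_le (lo i) (real (Lim_seq (fun n => x n i)))).
    apply (is_lim_seq_le (fun _ => lo i) (fun n => x n i)); [|apply is_lim_seq_const|apply Hlim].
    intro n; apply (proj1 (iterates_increasing_bounded n)).
  + change (Rbar_le (real (Lim_seq (fun n => x n i))) (hi i)).
    apply (is_lim_seq_le (fun n => x n i) (fun _ => hi i)); [|apply Hlim|apply is_lim_seq_const].
    intro n; destruct (iterates_increasing_bounded n) as [_ [Hinc Hhi]].
    apply Rle_trans with (x (S n) i); [apply Hinc|apply Hhi].
- intro i.
  assert (Hshift : is_lim_seq (fun n => x (S n) i) (real (Lim_seq (fun n => x n i))))
    by exact (proj1 (is_lim_seq_incr_1 _ _) (Hlim i)).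
  pose proof (T_continuous x _ Hlim i) as HT.
  apply is_lim_seq_unique in Hshift; apply is_lim_seq_unique in HT.
  change (Lim_seq (fun n => x (S n) i)) with (Lim_seq (fun n => T (x n) i)) in Hshift.
  rewrite HT in Hshift; injection Hshift as Hfix; exact Hfix.
Qed.

End MonotoneIteration.

Definition discrete_rhs (a d k : R) (u : Z -> R) (i : Z) : R :=
  d * (k * u (i + 1)%Z - (k + 1) * u i + u (i - 1)%Z) + g (u i) a.

(* The damping [1 + (k + 1) d] makes the step monotone, since [g' >= -1] on [[0, 1]]. *)
Definition relaxation_step (a d k : R) (u : Z -> R) (i : Z) : R :=
  u i + discrete_rhs a d k u i / (1 + (k + 1) * d).

Definition pattern_lower (a : R) (s : Z -> bool) (i : Z) : R := if s i then (1 + a) / 2 else 0.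

Definition pattern_upper (a : R) (s : Z -> bool) (i : Z) : R := if s i then 1 else a / 2.

Lemma g_increment_ge a x y : 0 < a < 1 -> 0 <= x <= y -> y <= 1 -> x - y <= g y a - g x a.
Proof.
intros ha hx hy; unfold g.
replace (y * (1 - y) * (y - a) - x * (1 - x) * (x - a))
  with ((y - x) * ((1 + a) * (x + y) - (x * x + x * y + y * y) - a)) by ring.
assert (-1 <= (1 + a) * (x + y) - (x * x + x * y + y * y) - a)
  by (assert (0 <= x * (1 - x)) by nra; assert (0 <= y * (1 - y)) by nra;
      assert (0 <= x * (1 - y)) by nra; nra).
nra.
Qed.

Lemma relaxation_step_monotone a d k (u w : Z -> R) i :
  0 < k -> 0 < a < 1 -> 0 < d ->
  (forall j, 0 <= u j) -> (forall j, u j <= w j) -> (forall j, w j <= 1) ->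
  relaxation_step a d k u i <= relaxation_step a d k w i.
Proof.
intros hk ha hd Hu Huw Hw; unfold relaxation_step, Rdiv.
set (L := 1 + (k + 1) * d).
assert (HL : 0 < / L) by (apply Rinv_0_lt_compat; unfold L; nra).
assert (HLinv : / L * L = 1) by (apply Rinv_l; unfold L; nra).
assert (Hdiff : - (L * (w i - u i)) <= discrete_rhs a d k w i - discrete_rhs a d k u i).
{ unfold discrete_rhs, L.
  pose proof (g_increment_ge a (u i) (w i) ha (conj (Hu i) (Huw i)) (Hw i)).
  assert (0 <= d * k * (w (i + 1)%Z - u (i + 1)%Z))
    by (apply Rmult_le_pos; [nra|pose proof (Huw (i + 1)%Z); lra]).
  assert (0 <= d * (w (i - 1)%Z - u (i - 1)%Z))
    by (apply Rmult_le_pos; [lra|pose proof (Huw (i - 1)%Z); lra]).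
  lra. }
apply (Rmult_le_compat_l (/ L)) in Hdiff; [|lra].
replace (/ L * - (L * (w i - u i))) with (- (/ L * L) * (w i - u i)) in Hdiff by ring.
rewrite HLinv in Hdiff; lra.
Qed.

Lemma relaxation_step_continuous a d k (un : nat -> Z -> R) (u : Z -> R) :
  (forall j, is_lim_seq (fun n => un n j) (u j)) ->
  forall i, is_lim_seq (fun n => relaxation_step a d k (un n) i) (relaxation_step a d k u i).
Proof.
intros Hcv i; unfold relaxation_step, discrete_rhs, g, Rdiv.
pose proof (Hcv i) as Ci; pose proof (Hcv (i + 1)%Z) as Cp; pose proof (Hcv (i - 1)%Z) as Cm.
apply is_lim_seq_plus'; [exact Ci|].
apply is_lim_seq_mult'; [|apply is_lim_seq_const].
apply is_lim_seq_plus'.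
- apply is_lim_seq_mult'; [apply is_lim_seq_const|].
  apply is_lim_seq_plus'; [|exact Cm].
  apply is_lim_seq_minus'; apply is_lim_seq_mult'; auto using is_lim_seq_const.
- apply is_lim_seq_mult'; [apply is_lim_seq_mult'|].
  + exact Ci.
  + apply is_lim_seq_minus'; [apply is_lim_seq_const|exact Ci].
  + apply is_lim_seq_minus'; [exact Ci|apply is_lim_seq_const].
Qed.

Lemma discrete_rhs_pattern_lower_nonneg a d k s i :
  0 < k -> 0 < a < 1 -> 0 < d -> 4 * d * (k + 1) <= (1 - a) ^ 2 ->
  0 <= discrete_rhs a d k (pattern_lower a s) i.
Proof.
intros hk ha hd hsmall; unfold discrete_rhs, pattern_lower, g.
assert (0 <= d * (k * (if s (i + 1)%Z then (1 + a) / 2 else 0)))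
  by (apply Rmult_le_pos; [lra|apply Rmult_le_pos; [lra|destruct (s (i + 1)%Z); lra]]).
assert (0 <= d * (if s (i - 1)%Z then (1 + a) / 2 else 0))
  by (apply Rmult_le_pos; [lra|destruct (s (i - 1)%Z); lra]).
destruct (s i); nra.
Qed.

Lemma discrete_rhs_pattern_upper_nonpos a d k s i :
  0 < k -> 0 < a < 1 -> 0 < d -> 4 * d * (k + 1) <= a ^ 2 ->
  discrete_rhs a d k (pattern_upper a s) i <= 0.
Proof.
intros hk ha hd hsmall; unfold discrete_rhs, pattern_upper, g.
assert (d * (k * (if s (i + 1)%Z then 1 else a / 2)) <= d * k)
  by (rewrite <- (Rmult_1_r (d * k)), Rmult_assoc; apply Rmult_le_compat_l; [lra|];
      apply Rmult_le_compat_l; [lra|destruct (s (i + 1)%Z); lra]).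
assert (d * (if s (i - 1)%Z then 1 else a / 2) <= d)
  by (rewrite <- (Rmult_1_r d) at 2; apply Rmult_le_compat_l; [lra|destruct (s (i - 1)%Z); lra]).
destruct (s i); nra.
Qed.

Lemma discrete_equilibrium_between_patterns a d k s :
  0 < k -> 0 < a < 1 -> 0 < d -> 4 * d * (k + 1) <= a ^ 2 -> 4 * d * (k + 1) <= (1 - a) ^ 2 ->
  exists u, (forall i, discrete_rhs a d k u i = 0) /\
            (forall i, pattern_lower a s i <= u i <= pattern_upper a s i).
Proof.
intros hk ha hd hsmall1 hsmall2.
assert (HL : 0 < 1 + (k + 1) * d) by nra.
assert (Hlo : forall i, 0 <= pattern_lower a s i)
  by (intro i; unfold pattern_lower; destruct (s i); lra).
assert (Hhi : forall i, pattern_upper a s i <= 1)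
  by (intro i; unfold pattern_upper; destruct (s i); lra).
destruct (monotone_iteration_fixed_point Z (relaxation_step a d k)
            (pattern_lower a s) (pattern_upper a s)) as [u [Hbounds Hfix]].
- intro i; unfold pattern_lower, pattern_upper; destruct (s i); lra.
- intros v w Hv Hvw Hw i; apply relaxation_step_monotone; auto.
  + intro j; apply Rle_trans with (pattern_lower a s j); auto.
  + intro j; apply Rle_trans with (pattern_upper a s j); auto.
- intro i; unfold relaxation_step.
  pose proof (discrete_rhs_pattern_lower_nonneg a d k s i hk ha hd hsmall2).
  assert (0 <= discrete_rhs a d k (pattern_lower a s) i / (1 + (k + 1) * d))
    by (apply Rdiv_le_0_compat; lra).
  lra.
- intro i; unfold relaxation_step.
  pose proof (discrete_rhs_pattern_upper_nonpos a d k s i hk ha hd hsmall1).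
  assert (discrete_rhs a d k (pattern_upper a s) i / (1 + (k + 1) * d) <= 0)
    by (apply Rmult_le_0_r; [lra|apply Rlt_le, Rinv_0_lt_compat; lra]).
  lra.
- apply relaxation_step_continuous.
- exists u; split; [|exact Hbounds].
  intro i; specialize (Hfix i); unfold relaxation_step in Hfix.
  assert (Hzero : discrete_rhs a d k u i / (1 + (k + 1) * d) = 0) by lra.
  apply Rmult_integral in Hzero as [Hzero|Hzero]; [exact Hzero|].
  exfalso; apply (Rinv_neq_0_compat (1 + (k + 1) * d)); lra.
Qed.

Lemma stationary_of_discrete_equilibrium a d k (u : Z -> R) :
  (forall i, discrete_rhs a d k u i = 0) -> stationary_solution a d k (fun xi => u (Zfloor xi)).
Proof.
intros Hu xi; unfold lattice_rhs.
replace (xi - 1) with (xi + IZR (-1)) by (simpl; ring).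
rewrite (Zfloor_addz 1), (Zfloor_addz (-1)).
rewrite <- (Hu (Zfloor xi)); reflexivity.
Qed.

Lemma stationary_solution_with_pattern a d k (s : Z -> bool) :
  0 < k -> 0 < a < 1 -> 0 < d -> 4 * d * (k + 1) <= a ^ 2 -> 4 * d * (k + 1) <= (1 - a) ^ 2 ->
  exists Phi, stationary_solution a d k Phi /\
    (forall i : Z, (s i = false -> 0 <= Phi (IZR i) < a) /\ (s i = true -> a < Phi (IZR i) <= 1)) /\
    (forall xi, Rabs (Phi xi) <= 1).
Proof.
intros hk ha hd hsmall1 hsmall2.
destruct (discrete_equilibrium_between_patterns a d k s hk ha hd hsmall1 hsmall2)
  as [u [Hu Hbounds]].
exists (fun xi => u (Zfloor xi)); split; [|split].
- exact (stationary_of_discrete_equilibrium a d k u Hu).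
- intro i; rewrite ZfloorZ; pose proof (Hbounds i) as Hb.
  unfold pattern_lower, pattern_upper in Hb.
  split; intro Hs; rewrite Hs in Hb; lra.
- intro xi; pose proof (Hbounds (Zfloor xi)) as Hb.
  unfold pattern_lower, pattern_upper in Hb.
  destruct (s (Zfloor xi)); rewrite Rabs_pos_eq; lra.
Qed.

Lemma infinitely_many_bounded_stationary_solutions a d k :
  0 < k -> 0 < a < 1 -> 0 < d -> 4 * d * (k + 1) <= a ^ 2 -> 4 * d * (k + 1) <= (1 - a) ^ 2 ->
  exists F : nat -> R -> R, (forall n m, F n = F m -> n = m) /\
    forall n, stationary_solution a d k (F n) /\ exists M, forall xi, Rabs (F n xi) <= M.
Proof.
intros hk ha hd hsmall1 hsmall2.
set (bump n i := Z.eqb i (Z.of_nat n)).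
destruct (choice _ (fun n =>
  stationary_solution_with_pattern a d k (bump n) hk ha hd hsmall1 hsmall2)) as [F HF].
exists F; split.
- intros n m Hnm; destruct (Nat.eq_dec n m) as [|Hne]; [assumption|exfalso].
  destruct (HF n) as [_ [Hn _]]; destruct (HF m) as [_ [Hm _]].
  destruct (Hn (Z.of_nat n)) as [_ Hhigh]; destruct (Hm (Z.of_nat n)) as [Hlow _].
  specialize (Hhigh (Z.eqb_refl _)).
  assert (Hne' : Z.of_nat n <> Z.of_nat m) by lia.
  specialize (Hlow (proj2 (Z.eqb_neq _ _) Hne')).
  rewrite Hnm in Hhigh; lra.
- intro n; destruct (HF n) as [Hst [_ Hbd]]; split; [exact Hst|exists 1; exact Hbd].
Qed.

(* [0 <= B] covers the empty case, where the supremum [m_infty] is read as [real m_infty = 0]. *)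
Lemma real_Lub_Rbar_le (E : R -> Prop) (B : R) :
  (forall x, E x -> x <= B) -> 0 <= B -> real (Lub_Rbar E) <= B.
Proof.
intros HB hB.
destruct (Lub_Rbar_correct E) as [_ Hleast].
specialize (Hleast B HB).
destruct (Lub_Rbar E); simpl in *; [exact Hleast|contradiction|exact hB].
Qed.

Lemma d_minus_le a : 0 < a < 1 -> d_minus a <= (1 - a) ^ 2 / 4.
Proof.
intro ha; unfold d_minus; apply real_Lub_Rbar_le; [|nra].
intros z [y [hy ->]]; unfold g.
replace (y * (1 - y) * (y - a) / y) with ((1 - y) * (y - a)) by (field; lra).
pose proof (pow2_ge_0 (y - (1 + a) / 2)); nra.
Qed.

Lemma d_plus_le a k : 0 < k -> 0 < a < 1 -> k * d_plus a k <= a ^ 2 / 4.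
Proof.
intros hk ha; unfold d_plus.
rewrite Rmult_comm; apply Rle_div_r; [lra|].
apply real_Lub_Rbar_le; [|apply Rdiv_le_0_compat; nra].
intros z [y [hy ->]]; unfold g.
replace (- ((1 - y) * (1 - (1 - y)) * (1 - y - a)) / (k * y)) with ((1 - y) * (a - (1 - y)) / k)
  by (field; lra).
apply Rmult_le_compat_r; [apply Rlt_le, Rinv_0_lt_compat; lra|].
pose proof (pow2_ge_0 (1 - y - a / 2)); nra.
Qed.

Lemma d_zero_small a k d : 0 < k -> 0 < a < 1 -> d < d_zero a k ->
  4 * d * (k + 1) <= a ^ 2 /\ 4 * d * (k + 1) <= (1 - a) ^ 2.
Proof.
intros hk ha hd; unfold d_zero in hd.
apply Rlt_div_r in hd; [|lra].
pose proof (Rmin_l (k * d_plus a k) (d_minus a)); pose proof (Rmin_r (k * d_plus a k) (d_minus a)).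
pose proof (d_plus_le a k hk ha); pose proof (d_minus_le a ha).
split; lra.
Qed.

Lemma Rmin_quarter_squares k a : 0 < k -> 0 < a < 1 ->
  (a <= 1 / (1 / sqrt k + 1) -> Rmin (a ^ 2 / (4 * k)) ((1 - a) ^ 2 / 4) = a ^ 2 / (4 * k)) /\
  (a >= 1 / (1 / sqrt k + 1) -> Rmin (a ^ 2 / (4 * k)) ((1 - a) ^ 2 / 4) = (1 - a) ^ 2 / 4).
Proof.
intros hk ha.
set (s := sqrt k).
assert (hs : 0 < s) by (apply sqrt_lt_R0; lra).
assert (hss : s * s = k) by (apply sqrt_sqrt; lra).
set (P := (1 + s) * (a + s * (1 - a)) / (4 * k)).
assert (hP : 0 < P) by (apply Rdiv_lt_0_compat; nra).
assert (Hfactor : a ^ 2 / (4 * k) - (1 - a) ^ 2 / 4 = P * (a - 1 / (1 / s + 1)))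
  by (unfold P; rewrite <- hss; field; lra).
split; intro h; [apply Rmin_left|apply Rmin_right]; nra.
Qed.
Theorem proposition2p8 (k a : R) (hk : 0 < k) (ha : 0 < a < 1) :
  (* (i) *)
  ((a <= 1 / (1 / sqrt k + 1) ->
      Rmin (a ^ 2 / (4 * k)) ((1 - a) ^ 2 / 4) = a ^ 2 / (4 * k)) /\
   (a >= 1 / (1 / sqrt k + 1) ->
      Rmin (a ^ 2 / (4 * k)) ((1 - a) ^ 2 / 4) = (1 - a) ^ 2 / 4) /\
   (forall d : R, 0 < d -> d < Rmin (a ^ 2 / (4 * k)) ((1 - a) ^ 2 / 4) ->
      forall (c : R) (Phi : R -> R), monotone_tw_solution a d k c Phi -> c = 0)) /\
  (* (ii) *)
  ((forall d : R, 0 < d -> d < d_zero a k ->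
      forall s : Z -> bool,
        exists Phi : R -> R, stationary_solution a d k Phi /\
          forall i : Z,
            (s i = false -> 0 <= Phi (IZR i) < a) /\
            (s i = true -> a < Phi (IZR i) <= 1)) /\
   (forall d : R, 0 < d -> d < d_zero a k ->
      exists F : nat -> R -> R,
        (forall n m, F n = F m -> n = m) /\
        forall n, stationary_solution a d k (F n) /\
                  exists M, forall xi, Rabs (F n xi) <= M)) /\
  (* (iii) *)
  (1 < k -> forall d : R, a ^ 2 / (4 * (sqrt k - 1) ^ 2) < d ->
      forall (c : R) (Phi : R -> R), monotone_tw_solution a d k c Phi -> c < 0).
Proof.
split; [|split].
- destruct (Rmin_quarter_squares k a hk ha) as [Hleft Hright].
  split; [exact Hleft|split; [exact Hright|]].
  intros d hd hdmin c Phi Hsol.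
  pose proof (Rmin_l (a ^ 2 / (4 * k)) ((1 - a) ^ 2 / 4)) as Hl.
  pose proof (Rmin_r (a ^ 2 / (4 * k)) ((1 - a) ^ 2 / 4)) as Hr.
  assert (Hdk : d * (4 * k) < a ^ 2) by (apply Rlt_div_r; lra).
  apply (monotone_tw_pinned a d k c Phi hk ha hd); [lra|lra|exact Hsol].
- split; intros d hd hdz; destruct (d_zero_small a k d hk ha hdz) as [hsmall1 hsmall2].
  + intro s.
    destruct (stationary_solution_with_pattern a d k s hk ha hd hsmall1 hsmall2)
      as [Phi [Hst [Hpat _]]].
    now exists Phi.
  + exact (infinitely_many_bounded_stationary_solutions a d k hk ha hd hsmall1 hsmall2).
- intros hk1 d hd c Phi Hsol.
  assert (Hsigma : 0 < (sqrt k - 1) ^ 2)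
    by (apply pow_lt; pose proof (one_lt_sqrt k hk1); lra).
  assert (Hd : a ^ 2 < d * (4 * (sqrt k - 1) ^ 2)) by (apply Rlt_div_l; lra).
  assert (hd0 : 0 < d).
  { apply (Rmult_lt_reg_r (4 * (sqrt k - 1) ^ 2)); [lra|].
    assert (0 < a ^ 2) by (apply pow_lt; lra); lra. }
  apply (monotone_tw_speed_neg a d k c Phi hk1 ha hd0); [lra|exact Hsol].
Qed.
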